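(* Suppose that $\mathcal{H}$ is a group of automorphisms of a totally disconnected, locally compact group $G$ that is virtually flat. Then $\mathcal{H}_{FC_d}$ is a normal subgroup of $\mathcal{H}$ that contains every flat subgroup of $\mathcal{H}$ of finite index. In particular, $\mathcal{H}_{FC_d}$ has finite index in $\mathcal{H}$.
   Context: Automorphisms are continuous with continuous inverse. $\mathcal{B}(G)$ is the set of compact, open subgroups of $G$ with metric $d(V,W)=\log\bigl(|V:V\cap W|\cdot|W:W\cap V|\bigr)$. A set $B$ of automorphisms is bounded if $B.V=\{\beta(V):\beta\in B\}$ has bounded diameter for some (equivalently every) $V\in\mathcal{B}(G)$. $\mathcal{H}_{FC_d}=\{\varphi\in\mathcal{H}:\{\psi\varphi\psi^{-1}:\psi\in\mathcal{H}\}\text{ is bounded}\}$. The scale of $\varphi$ is $s_G(\varphi)=\min\{|\varphi(V):\varphi(V)\cap V|:V\in\mathcal{B}(G)\}$; a group $\mathcal{K}$ of automorphisms is flat if there is $O\in\mathcal{B}(G)$ with $|\varphi(O):\varphi(O)\cap O|=s_G(\varphi)$ for all $\varphi\in\mathcal{K}$; $\mathcal{H}$ is virtually flat if it has a flat subgroup of finite index. *)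

From HB Require Import structures.
From mathcomp Require Import all_boot.
From mathcomp Require Import boolp classical_sets topology.
From Stdlib Require Reals.

Set Implicit Arguments.
Unset Strict Implicit.
Unset Printing Implicit Defensive.

Local Open Scope classical_set_scope.

Section TDLCdef.
Variables (G : topologicalType) (mul : G -> G -> G) (inv : G -> G) (one : G).

Definition is_tdlc_group : Prop :=
  [/\ [/\ (forall x y z, mul x (mul y z) = mul (mul x y) z),
      (forall x, mul one x = x) & (forall x, mul (inv x) x = one)],
      continuous (fun p : G * G => mul p.1 p.2) /\ continuous inv,
      hausdorff_space G,
      locally_compact [set: G] &
      totally_disconnected [set: G]].

End TDLCdef.

Record tdlcGroup (G : topologicalType) := TDLCGroup {
  mul : G -> G -> G;
  inv : G -> G;
  one : G;
  tdlc_axioms : is_tdlc_group mul inv one }.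

Section TDLC.
Variables (G : topologicalType) (T : tdlcGroup G).
Local Notation mul := (mul T).
Local Notation inv := (inv T).
Local Notation one := (one T).

Definition is_subgroup (V : set G) : Prop :=
  [/\ V one, (forall x y, V x -> V y -> V (mul x y)) & (forall x, V x -> V (inv x))].

Definition compact_open_subgroup (V : set G) : Prop :=
  [/\ is_subgroup V, open V & compact V].

Definition has_index (A B : set G) (n : nat) : Prop :=
  exists s : 'I_n -> G, (forall i, A (s i)) /\
    (forall x, A x -> exists! i, B (mul (inv (s i)) x)).

(** the index |A : B| (0 if it is infinite; it is finite for compact open
    subgroups, the only case used) *)
Definition index (A B : set G) : nat := xget 0%N [set n | has_index A B n].

Definition dist (V W : set G) : Reals.Rdefinitions.R :=
  Reals.Rpower.ln (Reals.Raxioms.INR (index V (V `&` W) * index W (W `&` V))).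

Definition inverse_fun (f g : G -> G) : Prop := cancel f g /\ cancel g f.

Definition is_automorphism (f : G -> G) : Prop :=
  [/\ (forall x y, f (mul x y) = mul (f x) (f y)), continuous f &
      exists g, inverse_fun f g /\ continuous g].

Definition is_aut_group (H : set (G -> G)) : Prop :=
  [/\ (forall f, H f -> is_automorphism f), H id,
      (forall f g, H f -> H g -> H (f \o g)) &
      (forall f, H f -> exists2 g, H g & inverse_fun f g)].

Definition is_sub_aut_group (K H : set (G -> G)) : Prop :=
  K `<=` H /\ is_aut_group K.

Definition is_normal_sub_aut_group (K H : set (G -> G)) : Prop :=
  is_sub_aut_group K H /\
  forall psi psi' phi, H psi -> inverse_fun psi psi' -> K phi ->
    K (psi \o phi \o psi').

Definition finite_index (K H : set (G -> G)) : Prop :=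
  exists n (f : 'I_n -> G -> G), (forall i, H (f i)) /\
    forall h, H h -> exists i k, K k /\ h = f i \o k.

Definition bounded_auts (B : set (G -> G)) : Prop :=
  exists V, compact_open_subgroup V /\
    exists M : Reals.Rdefinitions.R, forall b1 b2, B b1 -> B b2 ->
      Reals.Rdefinitions.Rle (dist (b1 @` V) (b2 @` V)) M.

Definition FCd (H : set (G -> G)) : set (G -> G) :=
  [set phi | H phi /\
    bounded_auts [set f | exists psi psi', [/\ H psi, inverse_fun psi psi' &
                                               f = psi \o phi \o psi']]].

Definition displacement (phi : G -> G) (V : set G) : nat :=
  index (phi @` V) (phi @` V `&` V).

Definition scale (phi : G -> G) : nat :=
  xget 0%N [set n | (exists V, compact_open_subgroup V /\ n = displacement phi V) /\
                    forall V, compact_open_subgroup V -> (n <= displacement phi V)%N].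

Definition flat (K : set (G -> G)) : Prop :=
  exists O, compact_open_subgroup O /\
    forall phi, K phi -> displacement phi O = scale phi.

Definition virtually_flat (H : set (G -> G)) : Prop :=
  exists K, [/\ is_sub_aut_group K H, finite_index K H & flat K].

End TDLC.

(** Fix a compact open subgroup [O]. The metric [d] on B(G) is invariant under
    automorphisms, so a set of automorphisms is bounded iff [d(bO, O)] is
    bounded for [b] in it; hence [H_{FC_d}] is closed under products, inverses
    and conjugation. Let [K] be a flat subgroup of finite index, flat on [O].
    Every [psi] in [H] is [f_i k] with [k] in [K] and [f_i] one of finitely many
    coset representatives, so [psi phi psi^-1 = f_i beta f_i^-1] with
    [beta = k phi k^-1] in [K]. Flatness on [O] and the conjugation invariance
    of the scale give [d(beta O, O) = log (s(phi) s(phi^-1))], and the triangle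
    inequality gives [d(f_i beta f_i^-1 O, O) <= d(beta O, O) + 2 d(f_i O, O)],
    which is bounded independently of [psi]. *)

From Stdlib Require Import Reals Lra.
From HB Require Import structures.
From Pilot Require Import Defs.
From mathcomp Require Import all_boot.
From mathcomp Require Import boolp classical_sets topology.

Set Implicit Arguments.
Unset Strict Implicit.
Unset Printing Implicit Defensive.

Local Open Scope classical_set_scope.

(* [compact_cover] is only stated for pointed spaces. *)
Definition pointed_at (X : topologicalType) (x : X) : Type := X.
HB.instance Definition _ (X : topologicalType) (x : X) :=
  Topological.on (pointed_at x).
HB.instance Definition _ (X : topologicalType) (x : X) :=
  isPointed.Build (pointed_at x) x.

Lemma compact_cover_at (X : topologicalType) (x : X) (A : set X) :
  compact A -> cover_compact A.
Proof.
move=> cA; have cA' : @compact (pointed_at x) A := cA.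
by move: cA'; rewrite compact_cover.
Qed.

Lemma leq_card_rel (F : finType) m (R : 'I_m -> F -> Prop) :
  (forall j, exists i, R j i) -> (forall j j' i, R j i -> R j' i -> j = j') ->
  (m <= #|F|)%N.
Proof.
move=> /choice [f Rf] Runiq.
have f_inj : injective f by move=> j j' e; apply: (Runiq _ _ (f j)); rewrite // e.
by have := leq_card f f_inj; rewrite card_ord.
Qed.

Lemma ln_le x y : Rlt 0 x -> Rle x y -> Rle (ln x) (ln y).
Proof.
move=> x0 /Rle_lt_or_eq_dec [xy|->]; last exact: Rle_refl.
exact/Rlt_le/ln_increasing.
Qed.

Lemma ln_INR_submul a b c : (0 < c)%N -> (c <= a * b)%N ->
  Rle (ln (INR c)) (Rplus (ln (INR a)) (ln (INR b))).
Proof.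
move=> c_gt0 le_c_ab.
have ab_gt0 : (0 < a * b)%N := leq_trans c_gt0 le_c_ab.
have [a_gt0 b_gt0] : (0 < a)%N /\ (0 < b)%N by apply/andP; rewrite -muln_gt0.
rewrite -ln_mult -?mult_INR; try exact/lt_0_INR/ltP.
apply: ln_le; first exact/lt_0_INR/ltP.
by apply/le_INR/leP; rewrite multE.
Qed.

Lemma finite_family_bounded n (F : 'I_n -> R) : exists M, forall i, Rle (F i) M.
Proof.
elim: n F => [|n IH] F; first by exists R0; case.
have [M leFM] := IH (fun i => F (lift ord_max i)).
exists (Rmax M (F ord_max)) => i.
case: (unliftP ord_max i) => [j ->|->]; last exact: Rmax_r.
exact: Rle_trans (leFM j) (Rmax_l _ _).
Qed.

Lemma image_setI_inj (X : Type) (f : X -> X) (A B : set X) :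
  injective f -> f @` (A `&` B) = f @` A `&` f @` B.
Proof.
move=> f_inj; apply/seteqP; split=> x /=; first by case=> y [Ay By] <-; split; exists y.
by case=> -[y Ay <-] [z Bz /f_inj e]; exists y => //; split; rewrite // -e.
Qed.

Section TDLCGroup.
Variables (G : topologicalType) (T : tdlcGroup G).
Local Notation mul := (Defs.mul T).
Local Notation inv := (Defs.inv T).
Local Notation one := (Defs.one T).

Lemma inverse_funC (f g : G -> G) : inverse_fun f g -> inverse_fun g f.
Proof. by case. Qed.

Lemma inverse_fun_uniq (f g1 g2 : G -> G) :
  inverse_fun f g1 -> inverse_fun f g2 -> g1 = g2.
Proof. by move=> [_ gK1] [fK2 _]; apply: funext => x; rewrite -{2}(gK1 x) fK2. Qed.

Lemma inverse_fun_comp (f f' g g' : G -> G) :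
  inverse_fun f f' -> inverse_fun g g' -> inverse_fun (f \o g) (g' \o f').
Proof. by move=> [fK f'K] [gK g'K]; split; apply: can_comp. Qed.

Lemma image_inverse_fun (f g : G -> G) (A : set G) :
  inverse_fun f g -> f @` A = g @^-1` A.
Proof.
case=> fK gK; apply/seteqP; split=> x /=; first by case=> y Ay <-; rewrite fK.
by move=> Agx; exists (g x); rewrite ?gK.
Qed.

Lemma image_inverse_funK (f g : G -> G) (A : set G) :
  inverse_fun f g -> g @` (f @` A) = A.
Proof.
case=> fK gK; apply/seteqP; split=> x /=; first by case=> _ [y Ay <-] <-; rewrite fK.
by move=> Ax; exists (f x); [exists x|rewrite fK].
Qed.

Lemma mulA x y z : mul x (mul y z) = mul (mul x y) z.
Proof. by case: (tdlc_axioms T) => -[]. Qed.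

Lemma mul1g x : mul one x = x.
Proof. by case: (tdlc_axioms T) => -[]. Qed.

Lemma mulVg x : mul (inv x) x = one.
Proof. by case: (tdlc_axioms T) => -[]. Qed.

Lemma mulKg x y : mul (inv x) (mul x y) = y.
Proof. by rewrite mulA mulVg mul1g. Qed.

Lemma mulgV x : mul x (inv x) = one.
Proof. by rewrite -(mulKg (inv x) (mul x (inv x))) (mulKg x) mulVg. Qed.

Lemma mulg1 x : mul x one = x.
Proof. by rewrite -(mulVg x) mulA mulgV mul1g. Qed.

Lemma mulKVg x y : mul x (mul (inv x) y) = y.
Proof. by rewrite mulA mulgV mul1g. Qed.

Lemma mulgI x y z : mul x y = mul x z -> y = z.
Proof. by move=> e; rewrite -(mulKg x y) e mulKg. Qed.

Lemma inv_uniq a b : mul a b = one -> a = inv b.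
Proof. by move=> e; rewrite -(mulg1 a) -(mulgV b) mulA e mul1g. Qed.

Lemma invMg x y : inv (mul x y) = mul (inv y) (inv x).
Proof. by apply/esym/inv_uniq; rewrite -mulA mulKg mulVg. Qed.

Lemma invgK x : inv (inv x) = x.
Proof. by apply/esym/inv_uniq; rewrite mulgV. Qed.

Lemma lmul_continuous c : continuous (mul c).
Proof.
move=> y; have [_ [mul_cont _] _ _ _] := tdlc_axioms T.
apply: (@continuous2_cvg _ _ _ _ (nbhs y) _ (fun=> c) id (Defs.mul T)).
- exact: (mul_cont (c, y)).
- exact: cvg_cst.
- exact: cvg_id.
Qed.

Lemma subgroupI (A B : set G) :
  is_subgroup T A -> is_subgroup T B -> is_subgroup T (A `&` B).
Proof.
case=> A1 AM AV [B1 BM BV]; split=> //.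
- by move=> x y [? ?] [? ?]; split; [apply: AM|apply: BM].
- by move=> x [? ?]; split; [apply: AV|apply: BV].
Qed.

(** ** Cosets and the index *)

Definition same_lcoset (B : set G) x y := B (mul (inv x) y).

Section SameCoset.
Variable B : set G.
Hypothesis subB : is_subgroup T B.

Lemma same_lcoset_refl x : same_lcoset B x x.
Proof. by case: subB => B1 _ _; rewrite /same_lcoset mulVg. Qed.

Lemma same_lcoset_sym x y : same_lcoset B x y -> same_lcoset B y x.
Proof. by case: subB => _ _ BV /BV; rewrite /same_lcoset invMg invgK. Qed.

Lemma same_lcoset_trans x y z :
  same_lcoset B x y -> same_lcoset B y z -> same_lcoset B x z.
Proof.
by case: subB => _ BM _ Bxy Byz; have := BM _ _ Bxy Byz; rewrite -mulA mulKVg.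
Qed.

Lemma transversal_inj (A : set G) n (s : 'I_n -> G) :
  (forall i, A (s i)) -> (forall x, A x -> exists! i, same_lcoset B (s i) x) ->
  forall i j, same_lcoset B (s i) (s j) -> i = j.
Proof.
move=> As s_transv i j Bij; have [k [_ k_uniq]] := s_transv _ (As j).
by rewrite -(k_uniq i Bij) -(k_uniq j (same_lcoset_refl _)).
Qed.

Lemma has_index_uniq (A : set G) n m :
  has_index T A B n -> has_index T A B m -> n = m.
Proof.
suff le_mn n' m' : has_index T A B n' -> has_index T A B m' -> (m' <= n')%N.
  by move=> hn hm; apply/eqP; rewrite eqn_leq !le_mn.
move=> [s [As s_transv]] [t [At t_transv]]; rewrite -(card_ord n').
apply: (@leq_card_rel _ _ (fun j i => same_lcoset B (s i) (t j))).
  by move=> j; have [i [? _]] := s_transv _ (At j); exists i.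
move=> j j' i sij sij'; apply: (transversal_inj At t_transv).
exact: same_lcoset_trans (same_lcoset_sym sij) sij'.
Qed.

Lemma has_index_index (A : set G) n : has_index T A B n -> Defs.index T A B = n.
Proof.
move=> hn; rewrite /Defs.index; case: xgetP => [k -> hk|/(_ n)//].
exact: has_index_uniq hk hn.
Qed.

Lemma transversal_of_seq (A : set G) (l : seq G) : (forall y, y \in l -> A y) ->
  exists n (s : 'I_n -> G), [/\ forall i, A (s i),
    forall i j, same_lcoset B (s i) (s j) -> i = j &
    forall x y, y \in l -> same_lcoset B y x -> exists i, same_lcoset B (s i) x].
Proof.
elim: l => [|a l IH] Al; first by exists 0%N, (fun=> one); split=> [[]//|[]//|].
have [|n [s [As s_inj s_cover]]] := IH.
  by move=> y yl; apply: Al; rewrite inE yl orbT.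
have Aa : A a by apply: Al; rewrite inE eqxx.
have [[i0 Bi0a]|a_new] := pselect (exists i, same_lcoset B (s i) a).
  exists n, s; split=> // x y; rewrite inE => /orP[/eqP->|yl] Byx.
    by exists i0; apply: same_lcoset_trans Bi0a Byx.
  exact: s_cover yl Byx.
pose s' i := if unlift ord_max i is Some j then s j else a.
have s'_lift j : s' (lift ord_max j) = s j by rewrite /s' liftK.
have s'_max : s' ord_max = a by rewrite /s' unlift_none.
exists n.+1, s'; split.
- by move=> i; case: (unliftP ord_max i) => [j ->|->]; rewrite ?s'_lift ?s'_max.
- move=> i j; case: (unliftP ord_max i) => [i' ->|->];
    case: (unliftP ord_max j) => [j' ->|->]; rewrite ?s'_lift ?s'_max //.
  + by move/s_inj->.
  + by move=> Bi'a; case: a_new; exists i'.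
  + by move=> Baj'; case: a_new; exists j'; apply: same_lcoset_sym.
- move=> x y; rewrite inE => /orP[/eqP->|yl] Byx.
    by exists ord_max; rewrite s'_max.
  by have [i Bix] := s_cover _ _ yl Byx; exists (lift ord_max i); rewrite s'_lift.
Qed.

Lemma has_index_compact (A : set G) :
  compact A -> open B -> exists n, has_index T A B n.
Proof.
move=> /(compact_cover_at one) cA oB.
have A_cover : A `<=` cover A (same_lcoset B).
  by move=> y Ay; exists y => //; apply: same_lcoset_refl.
have [D sDA D_cover] := cA G A (same_lcoset B)
  (fun x _ => (continuousP _).1 (@lmul_continuous (inv x)) B oB) A_cover.
have [n [s [As s_inj s_cover]]] :=
  @transversal_of_seq A (finmap.enum_fset D) (fun y yD => set_mem (sDA y yD)).
exists n, s; split=> // x Ax.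
have [y yD Byx] := D_cover x Ax; have [i Bix] := s_cover x y yD Byx.
exists i; split=> // j Bjx; apply: s_inj.
exact: same_lcoset_trans Bix (same_lcoset_sym Bjx).
Qed.

End SameCoset.

(** ** Homomorphisms and automorphisms *)

Definition hom (f : G -> G) := forall x y, f (mul x y) = mul (f x) (f y).

Lemma hom_one f : hom f -> f one = one.
Proof. by move=> hf; apply: (@mulgI (f one)); rewrite -hf mul1g mulg1. Qed.

Lemma hom_inv f x : hom f -> f (inv x) = inv (f x).
Proof. by move=> hf; apply: inv_uniq; rewrite -hf mulVg hom_one. Qed.

Lemma hom_inverse_fun f g : hom f -> inverse_fun f g -> hom g.
Proof. by move=> hf [fK gK] x y; rewrite -{1}(gK x) -{1}(gK y) -hf fK. Qed.

Lemma has_index_image f g (A B : set G) n : hom f -> inverse_fun f g ->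
  has_index T A B n -> has_index T (f @` A) (f @` B) n.
Proof.
move=> hf [fK _] [s [As s_transv]].
have fB z : (f @` B) (f z) <-> B z.
  by split=> [[y By /(can_inj fK) <-]|Bz]; [|exists z].
exists (f \o s); split; first by move=> i; exists (s i).
move=> _ [x Ax <-]; have [i [Bix i_uniq]] := s_transv x Ax.
exists i; split=> /=; first by rewrite -hom_inv // -hf; apply/fB.
by move=> j; rewrite -hom_inv // -hf => /fB /i_uniq.
Qed.

Lemma index_image f g {A W : set G} : hom f -> inverse_fun f g ->
  Defs.index T (f @` A) (f @` A `&` f @` W) = Defs.index T A (A `&` W).
Proof.
move=> hf fg; have [fK gK] := fg.
rewrite -image_setI_inj; last exact: can_inj fK.
rewrite /Defs.index; congr (xget _ _); apply/seteqP; split=> n /=; last first.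
  exact: has_index_image hf fg.
move=> /(has_index_image (hom_inverse_fun hf fg) (inverse_funC fg)).
by rewrite !(image_inverse_funK _ fg).
Qed.

Lemma aut_hom f : is_automorphism T f -> hom f.
Proof. by case. Qed.

Lemma aut_inverse_fun f g :
  is_automorphism T f -> inverse_fun f g -> is_automorphism T g.
Proof.
move=> [hf f_cont [g0 [fg0 g0_cont]]] fg; rewrite -(inverse_fun_uniq fg0 fg).
split; [exact: hom_inverse_fun fg0|exact: g0_cont|].
by exists f; split; [exact: inverse_funC|].
Qed.

Lemma compact_open_subgroup_image f (A : set G) : is_automorphism T f ->
  compact_open_subgroup T A -> compact_open_subgroup T (f @` A).
Proof.
case=> hf f_cont [g [fg g_cont]] [[A1 AM AV] oA cA]; split; first split.
- by exists one => //; apply: hom_one.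
- by move=> _ _ [x Ax <-] [y Ay <-]; exists (mul x y); [apply: AM|apply: hf].
- by move=> _ [x Ax <-]; exists (inv x); [apply: AV|apply: hom_inv].
- by rewrite (image_inverse_fun _ fg); apply: (continuousP _).1.
- by apply: continuous_compact => //; apply: continuous_subspaceT.
Qed.

Lemma has_index_compact_open (A B : set G) : compact_open_subgroup T A ->
  compact_open_subgroup T B -> has_index T A (A `&` B) (Defs.index T A (A `&` B)).
Proof.
move=> [subA oA cA] [subB oB _]; have subAB := subgroupI subA subB.
have [n hn] := has_index_compact subAB cA (openI oA oB).
by rewrite (has_index_index subAB hn).
Qed.

Lemma index_compact_open_gt0 (A B : set G) : compact_open_subgroup T A ->
  compact_open_subgroup T B -> (0 < Defs.index T A (A `&` B))%N.
Proof.
move=> coA coB; have [s [_ s_transv]] := has_index_compact_open coA coB.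
have [[A1 _ _] _ _] := coA.
by have [i _] := s_transv _ A1; case: (Defs.index T A (A `&` B)) i => [[]|].
Qed.

(* The [A`&`C]-coset of [x] in [A] is determined by the [A`&`B]-coset of [x]
   together with the [B`&`C]-coset of [x] relative to its representative. *)
Lemma index_compact_open_submul (A B C : set G) : compact_open_subgroup T A ->
  compact_open_subgroup T B -> compact_open_subgroup T C ->
  (Defs.index T A (A `&` C) <= Defs.index T A (A `&` B) * Defs.index T B (B `&` C))%N.
Proof.
move=> coA coB coC.
have [s [_ s_transv]] := has_index_compact_open coA coB.
have [t [_ t_transv]] := has_index_compact_open coB coC.
have [u [Au u_transv]] := has_index_compact_open coA coC.
have [subA _ _] := coA; have [subC _ _] := coC; have [_ AM AV] := subA.
rewrite -(card_ord (Defs.index T A (A `&` B))).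
rewrite -(card_ord (Defs.index T B (B `&` C))) -card_prod.
apply: (@leq_card_rel _ _ (fun k ij => same_lcoset (A `&` B) (s ij.1) (u k) /\
   same_lcoset (B `&` C) (t ij.2) (mul (inv (s ij.1)) (u k)))).
  move=> k; have [i [ABi _]] := s_transv _ (Au k).
  by have [j [BCj _]] := t_transv _ ABi.2; exists (i, j).
move=> k k' [i j] /= [_ [_ Cj]] [_ [_ Cj']].
have Ckk' := same_lcoset_trans subC (same_lcoset_sym subC Cj) Cj'.
rewrite /same_lcoset invMg invgK -mulA mulKVg in Ckk'.
apply: (transversal_inj (subgroupI subA subC) Au u_transv); split=> //.
by apply: AM; [apply: AV|]; apply: Au.
Qed.

(** ** The metric on B(G) *)

Lemma distC (A B : set G) : dist T A B = dist T B A.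
Proof. by rewrite /dist mulnC. Qed.

Lemma dist_triangle (A B C : set G) : compact_open_subgroup T A ->
  compact_open_subgroup T B -> compact_open_subgroup T C ->
  Rle (dist T A C) (Rplus (dist T A B) (dist T B C)).
Proof.
move=> coA coB coC; rewrite /dist; apply: ln_INR_submul.
  by rewrite muln_gt0 !index_compact_open_gt0.
apply: leq_trans (leq_mul (index_compact_open_submul coA coB coC)
                          (index_compact_open_submul coC coB coA)) _.
by rewrite [X in (_ * X <= _)%N]mulnC mulnACA.
Qed.

Lemma dist_refl (A : set G) : compact_open_subgroup T A -> dist T A A = R0.
Proof.
move=> [subA _ _]; have [A1 _ _] := subA.
have hA : has_index T A (A `&` A) 1.
  exists (fun=> one); split=> // x Ax; exists ord0; split.
    by rewrite /= -(inv_uniq (mul1g one)) mul1g.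
  by move=> j _; rewrite (ord1 j).
by rewrite /dist (has_index_index (subgroupI subA subA) hA) ln_1.
Qed.

Lemma dist_aut f (A B : set G) : is_automorphism T f ->
  dist T (f @` A) (f @` B) = dist T A B.
Proof. by case=> hf _ [g [fg _]]; rewrite /dist !(index_image hf fg). Qed.

(** ** Conjugation, the scale and flatness *)

Lemma displacement_conj k k' phi (W : set G) :
  is_automorphism T k -> inverse_fun k k' ->
  displacement T (k \o phi \o k') W = displacement T phi (k' @` W).
Proof.
move=> ak kk; rewrite /displacement.
have -> : (k \o phi \o k') @` W = k @` (phi @` (k' @` W)) by rewrite !image_comp.
rewrite -[in X in _ `&` X](image_inverse_funK W (inverse_funC kk)).
exact: index_image (aut_hom ak) kk.
Qed.

Lemma scale_conj k k' phi : is_automorphism T k -> inverse_fun k k' ->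
  scale T (k \o phi \o k') = scale T phi.
Proof.
move=> ak kk; have ak' := aut_inverse_fun ak kk.
rewrite /scale; congr (xget _ _); apply/seteqP; split=> n /= [[V [coV ->]] V_min].
- split.
    exists (k' @` V); split; first exact: compact_open_subgroup_image ak' coV.
    exact: displacement_conj ak kk.
  move=> W coW; have := V_min _ (compact_open_subgroup_image ak coW).
  by rewrite (displacement_conj phi (k @` W) ak kk) (image_inverse_funK W kk).
- split.
    exists (k @` V); split; first exact: compact_open_subgroup_image ak coV.
    by rewrite (displacement_conj phi (k @` V) ak kk) (image_inverse_funK V kk).
  move=> W coW; rewrite (displacement_conj phi W ak kk).
  exact/V_min/compact_open_subgroup_image.
Qed.

Lemma dist_flat beta gamma (O : set G) : is_automorphism T beta ->
  inverse_fun beta gamma ->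
  displacement T beta O = scale T beta -> displacement T gamma O = scale T gamma ->
  dist T (beta @` O) O = ln (INR (scale T beta * scale T gamma)).
Proof.
move=> abeta bg beta_min gamma_min; rewrite /dist.
have -> : Defs.index T O (O `&` beta @` O) = displacement T gamma O.
  have e : O = beta @` (gamma @` O) by rewrite (image_inverse_funK O (inverse_funC bg)).
  rewrite {1 2}e; exact: index_image (aut_hom abeta) bg.
by rewrite -beta_min -gamma_min.
Qed.

Lemma dist_conj_le f j beta (O : set G) : compact_open_subgroup T O ->
  is_automorphism T f -> inverse_fun f j -> is_automorphism T beta ->
  Rle (dist T ((f \o beta \o j) @` O) O)
      (Rplus (dist T (beta @` O) O) (Rplus (dist T (f @` O) O) (dist T (f @` O) O))).
Proof.
move=> coO af fj abeta; have aj := aut_inverse_fun af fj.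
have cob := compact_open_subgroup_image abeta coO.
have cofb := compact_open_subgroup_image af cob.
have d1 := dist_triangle (compact_open_subgroup_image af
  (compact_open_subgroup_image abeta (compact_open_subgroup_image aj coO))) cofb coO.
have d2 := dist_triangle cofb (compact_open_subgroup_image af coO) coO.
have dj : dist T (j @` O) O = dist T (f @` O) O.
  by rewrite -(dist_aut _ _ af) (image_inverse_funK _ (inverse_funC fj)) distC.
rewrite !(dist_aut _ _ af) (dist_aut _ _ abeta) in d1.
rewrite (dist_aut _ _ af) in d2.
have -> : (f \o beta \o j) @` O = f @` (beta @` (j @` O)) by rewrite !image_comp.
lra.
Qed.

(** ** Groups of automorphisms *)

Section AutGroup.
Variable H : set (G -> G).
Hypothesis autH : is_aut_group T H.

Lemma aut_group_aut f : H f -> is_automorphism T f.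
Proof. by case: autH => Haut _ _ _; apply: Haut. Qed.

Lemma aut_group_id : H id.
Proof. by case: autH. Qed.

Lemma aut_group_comp f g : H f -> H g -> H (f \o g).
Proof. by case: autH => _ _ Hcomp _; apply: Hcomp. Qed.

Lemma aut_group_inverse_fun f g : H f -> inverse_fun f g -> H g.
Proof.
move=> Hf fg; have [_ _ _ Hinv] := autH; have [g0 Hg0 fg0] := Hinv f Hf.
by rewrite -(inverse_fun_uniq fg0 fg).
Qed.

Lemma aut_group_conj psi psi' phi :
  H psi -> inverse_fun psi psi' -> H phi -> H (psi \o phi \o psi').
Proof.
move=> Hpsi pp Hphi; apply: aut_group_comp; first exact: aut_group_comp.
exact: aut_group_inverse_fun pp.
Qed.

End AutGroup.

Definition orbit_bounded (O : set G) (S : set (G -> G)) :=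
  exists M, forall b, S b -> Rle (dist T (b @` O) O) M.

Section OrbitBounded.
Variables (O : set G) (S : set (G -> G)).
Hypotheses (coO : compact_open_subgroup T O) (autS : S `<=` is_automorphism T).

Lemma orbit_bounded_bounded : orbit_bounded O S -> bounded_auts T S.
Proof.
move=> [M leM]; exists O; split=> //; exists (Rplus M M) => b1 b2 Sb1 Sb2.
have := dist_triangle (compact_open_subgroup_image (autS Sb1) coO) coO
  (compact_open_subgroup_image (autS Sb2) coO).
by rewrite (distC O); have := leM _ Sb1; have := leM _ Sb2; lra.
Qed.

Lemma bounded_orbit_bounded b0 : S b0 -> bounded_auts T S -> orbit_bounded O S.
Proof.
move=> Sb0 [V [coV [M leM]]].
exists (Rplus (Rplus (dist T O V) M) (dist T (b0 @` V) O)) => b Sb.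
have := dist_triangle (compact_open_subgroup_image (autS Sb) coO)
  (compact_open_subgroup_image (autS Sb) coV) coO.
have := dist_triangle (compact_open_subgroup_image (autS Sb) coV)
  (compact_open_subgroup_image (autS Sb0) coV) coO.
by rewrite (dist_aut _ _ (autS Sb)); have := leM _ _ Sb Sb0; lra.
Qed.

End OrbitBounded.

Section FCd.
Variable H : set (G -> G).
Hypothesis autH : is_aut_group T H.

Definition conj_class phi : set (G -> G) := [set f | exists psi psi',
  [/\ H psi, inverse_fun psi psi' & f = psi \o phi \o psi']].

Lemma conj_class_sub phi : H phi -> conj_class phi `<=` H.
Proof. by move=> Hphi _ [psi [psi' [Hpsi pp ->]]]; apply: aut_group_conj. Qed.

Lemma conj_class_id phi : conj_class phi phi.
Proof. by exists id, id; split=> //; apply: aut_group_id. Qed.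

Lemma FCdE (O : set G) phi : compact_open_subgroup T O ->
  FCd T H phi <-> H phi /\ orbit_bounded O (conj_class phi).
Proof.
move=> coO; split=> -[Hphi bounded]; split=> //.
- apply: (bounded_orbit_bounded coO _ (conj_class_id phi) bounded) => b Cb.
  exact: (aut_group_aut autH (conj_class_sub Hphi Cb)).
- apply: (orbit_bounded_bounded coO _ bounded) => b Cb.
  exact: (aut_group_aut autH (conj_class_sub Hphi Cb)).
Qed.

Section FCdNormal.
Variable O : set G.
Hypothesis coO : compact_open_subgroup T O.

Lemma FCd_id : FCd T H id.
Proof.
apply/(FCdE _ coO); split; first exact: aut_group_id.
exists R0 => _ [psi [psi' [_ [_ pK] ->]]].
have -> : psi \o id \o psi' = id by apply: funext => x /=; rewrite pK.
by rewrite image_id dist_refl //; apply: Rle_refl.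
Qed.

Lemma FCd_comp f1 f2 : FCd T H f1 -> FCd T H f2 -> FCd T H (f1 \o f2).
Proof.
move=> /(FCdE _ coO) [H1 [M1 leM1]] /(FCdE _ coO) [H2 [M2 leM2]].
apply/(FCdE _ coO); split; first exact: aut_group_comp.
exists (Rplus M2 M1) => _ [psi [psi' [Hpsi pp ->]]].
have C1 : conj_class f1 (psi \o f1 \o psi') by exists psi, psi'.
have C2 : conj_class f2 (psi \o f2 \o psi') by exists psi, psi'.
have -> : psi \o (f1 \o f2) \o psi' = (psi \o f1 \o psi') \o (psi \o f2 \o psi').
  by apply: funext => x /=; case: pp => ->.
rewrite -image_comp.
have a1 := aut_group_aut autH (conj_class_sub H1 C1).
have a2 := aut_group_aut autH (conj_class_sub H2 C2).
have := dist_triangle (compact_open_subgroup_image a1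
  (compact_open_subgroup_image a2 coO)) (compact_open_subgroup_image a1 coO) coO.
by rewrite dist_aut //; have := leM1 _ C1; have := leM2 _ C2; lra.
Qed.

Lemma FCd_inverse_fun f g : FCd T H f -> inverse_fun f g -> FCd T H g.
Proof.
move=> /(FCdE _ coO) [Hf [M leM]] fg.
apply/(FCdE _ coO); split; first exact: aut_group_inverse_fun fg.
exists M => _ [psi [psi' [Hpsi pp ->]]].
have Cf : conj_class f (psi \o f \o psi') by exists psi, psi'.
have af := aut_group_aut autH (conj_class_sub Hf Cf).
have conj_fg : inverse_fun (psi \o g \o psi') (psi \o f \o psi').
  by have [pK p'K] := pp; have [fK gK] := fg; split=> x /=; rewrite pK ?fK ?gK p'K.
rewrite -(dist_aut _ _ af) (image_inverse_funK _ conj_fg) distC.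
exact: leM.
Qed.

Lemma FCd_conj psi psi' phi : H psi -> inverse_fun psi psi' ->
  FCd T H phi -> FCd T H (psi \o phi \o psi').
Proof.
move=> Hpsi pp /(FCdE _ coO) [Hphi [M leM]].
apply/(FCdE _ coO); split; first exact: aut_group_conj.
exists M => _ [chi [chi' [Hchi cc ->]]]; apply: leM.
exists (chi \o psi), (psi' \o chi'); split=> //; first exact: aut_group_comp.
exact: inverse_fun_comp.
Qed.

Lemma FCd_normal : is_normal_sub_aut_group T (FCd T H) H.
Proof.
split=> [|psi psi' phi]; last exact: FCd_conj.
split; first by move=> f [].
split; [|exact: FCd_id|exact: FCd_comp|].
  by move=> f [Hf _]; exact: (aut_group_aut autH Hf).
move=> f FCf; have [Hf _] := FCf.
have [_ _ _ Hinv] := autH; have [g _ fg] := Hinv f Hf.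
by exists g => //; apply: FCd_inverse_fun fg.
Qed.

End FCdNormal.

Lemma flat_sub_FCd K : is_sub_aut_group T K H -> finite_index K H -> flat T K ->
  K `<=` FCd T H.
Proof.
move=> [KH autK] [n [f [Hf f_cover]]] [O [coO K_flat]] phi Kphi.
have [_ _ _ K_inv] := autK; have [g Kg phig] := K_inv phi Kphi.
have [M0 leM0] := finite_family_bounded (fun i => dist T (f i @` O) O).
apply/(FCdE _ coO); split; first exact: KH.
exists (Rplus (ln (INR (scale T phi * scale T g))) (Rplus M0 M0)).
move=> _ [psi [psi' [/f_cover [i [k [Kk ->]]] pp ->]]].
have [k' _ kk] := K_inv k Kk; have [kK k'K] := kk.
pose beta := k \o phi \o k'; pose gamma := k \o g \o k'.
have -> : f i \o k \o phi \o psi' = f i \o beta \o (k \o psi').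
  by apply: funext => x; rewrite /beta /= kK.
have fj : inverse_fun (f i) (k \o psi').
  have [pK p'K] := pp; split=> x /=; last exact: p'K.
  by have := pK (k' x); rewrite /= k'K => ->; rewrite k'K.
have beta_gamma : inverse_fun beta gamma.
  by have [phiK gK] := phig; split=> x; rewrite /beta /gamma /= ?kK ?phiK ?gK ?k'K.
have Kbeta : K beta := aut_group_conj autK Kk kk Kphi.
have Kgamma : K gamma := aut_group_conj autK Kk kk Kg.
have d_beta : dist T (beta @` O) O = ln (INR (scale T phi * scale T g)).
  rewrite (dist_flat (aut_group_aut autK Kbeta) beta_gamma (K_flat _ Kbeta)
    (K_flat _ Kgamma)).
  by rewrite /beta /gamma !scale_conj //; exact: (aut_group_aut autK Kk).
have := dist_conj_le coO (aut_group_aut autH (Hf i)) fj (aut_group_aut autK Kbeta).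
by rewrite d_beta; have := leM0 i; rewrite /=; lra.
Qed.

End FCd.

End TDLCGroup.

Theorem lemma3 (G : topologicalType) (T : tdlcGroup G) (H : set (G -> G)) :
  is_aut_group T H ->
  virtually_flat T H ->
  [/\ is_normal_sub_aut_group T (FCd T H) H,
      (forall K, is_sub_aut_group T K H -> finite_index K H ->
                 flat T K -> K `<=` FCd T H) &
      finite_index (FCd T H) H].
Proof.
move=> autH [K [subK fiK flatK]]; have [O [coO _]] := flatK.
split; [exact: (FCd_normal autH coO)|exact: (flat_sub_FCd autH)|].
have [n [f [Hf f_cover]]] := fiK; exists n, f; split=> // h Hh.
have [i [k [Kk ->]]] := f_cover h Hh.
by exists i, k; split=> //; exact: (flat_sub_FCd autH subK fiK flatK Kk).
Qed.
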